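(* Let $N\ge1$, $q,p,r,s\in\mathbb{C}\setminus\{0\}$ with $q^2\ne1$, $r^2\neq1$. Then $K(\lambda):=K^{\mathrm{tr}}(\lambda,r,s)$ is a solution of the reflection equation for $R(\lambda):=R^{\mathrm{tr}}(\lambda,q,p)$: $$R_{12}(\lambda-\mu)K_1(\lambda)R_{21}(\lambda+\mu)K_2(\mu)=K_2(\mu)R_{12}(\lambda+\mu)K_1(\lambda)R_{21}(\lambda-\mu)$$ for all $\lambda,\mu\in\mathbb{C}$ at which all entries are defined.
   Context: $V=\mathbb{C}^N$ with basis $e_0,\dots,e_{N-1}$; for $A\in\mathrm{End}(V)$, $Ae_j=\sum_k e_k[A]_j^k$; for $R\in\mathrm{End}(V\otimes V)$, $R(e_i\otimes e_j)=\sum_{k,l}[R]_{ij}^{kl}e_k\otimes e_l$. $P$ is the flip, $R_{12}=R$, $R_{21}=PRP$, $K_1=K\otimes I$, $K_2=I\otimes K$. Cremmer–Gervais $R$-matrix with $z=e^{\pi i\lambda}$: $[R^{\mathrm{tr}}(\lambda,q,p)]_{ij}^{kl}=p^{2(j-k)}\times$ - $\frac{qz^{-1}-q^{-1}z}{(q-q^{-1})(z-z^{-1})}$ if $i=j=k=l$; - $-\frac{q^{\mathrm{sgn}(i-j)}}{q-q^{-1}}$ if $i=k\neq j=l$; - $\frac{z^{\mathrm{sgn}(j-i)}}{z-z^{-1}}$ if $l=i\ne k=j$; - $\mathrm{sgn}(j-i)$ if $\min(i,j)<k<\max(i,j)$ and $i+j=k+l$; - $0$ otherwise. $K$-matrix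 with $z=e^{\pi i\lambda}$: $[K^{\mathrm{tr}}(\lambda,r,s)]_j^k=s^{j-k}c_{jk}$ where $c_{jk}=\frac{r^{-1}z^{-2}-rz^2}{(r-r^{-1})(z^2-z^{-2})}$ if $j=k=(N-1)/2$; $c_{jk}=-\frac{z^{2\,\mathrm{sgn}(2j-N+1)}}{z^2-z^{-2}}$ if $j=k\ne(N-1)/2$; $c_{jk}=-\frac{r^{\mathrm{sgn}(2j-N+1)}}{r-r^{-1}}$ if $k=N-1-j\neq j$; $c_{jk}=\mathrm{sgn}(N-1-2j)$ if $\min(j,N-1-j)<k<\max(j,N-1-j)$; $c_{jk}=0$ otherwise. *)

From HB Require Import structures.
From mathcomp Require Import all_boot all_order all_algebra.
Set Implicit Arguments. Unset Strict Implicit. Unset Printing Implicit Defensive.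
Import Order.TTheory GRing.Theory Num.Theory.
Local Open Scope ring_scope.

(* Endomorphisms of V = C^N are encoded by their entries:
   A : endo1 with A j k = [A]_j^k  (A e_j = sum_k e_k [A]_j^k).
   Endomorphisms of V (x) V: T : endo2 with T i j k l = [T]_{ij}^{kl}
   (T (e_i (x) e_j) = sum_{k,l} [T]_{ij}^{kl} e_k (x) e_l). *)
Definition endo1 (C : Type) (N : nat) := 'I_N -> 'I_N -> C.
Definition endo2 (C : Type) (N : nat) := 'I_N -> 'I_N -> 'I_N -> 'I_N -> C.

Definition comp2 (C : fieldType) (N : nat) (A B : endo2 C N) : endo2 C N :=
  fun i j m n => \sum_(k < N) \sum_(l < N) B i j k l * A k l m n.

Definition flip2 (C : fieldType) (N : nat) : endo2 C N :=
  fun i j k l => ((k == j) && (l == i))%:R.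

Definition op21 (C : fieldType) (N : nat) (R : endo2 C N) : endo2 C N :=
  comp2 (@flip2 C N) (comp2 R (@flip2 C N)).

Definition K1 (C : fieldType) (N : nat) (K : endo1 C N) : endo2 C N :=
  fun i j k l => K i k * (l == j)%:R.
Definition K2 (C : fieldType) (N : nat) (K : endo1 C N) : endo2 C N :=
  fun i j k l => (k == i)%:R * K j l.

Definition sgnC (C : fieldType) (x : int) : C := (sgz x)%:~R.

(* Cremmer-Gervais R-matrix R^tr(lambda,q,p), expressed through z = e^{pi i lambda} *)
Definition Rtr (C : fieldType) (N : nat) (z q p : C) : endo2 C N :=
  fun i j k l =>
    let I := (i : nat)%:Z in let J := (j : nat)%:Z in
    let Kk := (k : nat)%:Z in let L := (l : nat)%:Z in
    (p ^ ((J - Kk) * 2)) *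
    (if [&& i == j, j == k & k == l] then
       (q * z^-1 - q^-1 * z) / ((q - q^-1) * (z - z^-1))
     else if [&& i == k, j == l & i != j] then
       - (q ^ (sgz (I - J))) / (q - q^-1)
     else if [&& l == i, k == j & i != k] then
       (z ^ (sgz (J - I))) / (z - z^-1)
     else if (Num.min I J < Kk < Num.max I J) && (I + J == Kk + L) then
       sgnC C (J - I)
     else 0).

(* K-matrix K^tr(lambda,r,s), expressed through z = e^{pi i lambda} *)
Definition Ktr (C : fieldType) (N : nat) (z r s : C) : endo1 C N :=
  fun j k =>
    let J := (j : nat)%:Z in let Kk := (k : nat)%:Z in
    let M := (N%:Z - 1 - J) in
    let sg := sgz (J * 2 - N%:Z + 1) in
    (s ^ (J - Kk)) *
    (if (j == k :> nat) && (J * 2 == N%:Z - 1) then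
       (r^-1 * z^-2 - r * z ^+ 2) / ((r - r^-1) * (z ^+ 2 - z^-2))
     else if (j == k :> nat) && (J * 2 != N%:Z - 1) then
       - ((z ^+ 2) ^ sg) / (z ^+ 2 - z^-2)
     else if (Kk == M) && (Kk != J) then
       - (r ^ sg) / (r - r^-1)
     else if Num.min J M < Kk < Num.max J M then
       sgnC C (N%:Z - 1 - J * 2)
     else 0).

(* The parameters p and s only twist the equation: since R conserves the weight
   i + j = k + l, every nonzero term on either side of the reflection equation
   carries the same factor p^(2(i-k)) s^(i+j-k-l), so we may take p = s = 1.
   Identify u in V (x) V with the polynomial sum_ij u_ij x^i y^j.  Summing the
   geometric series along the anti-diagonals of R and the anti-diagonal band of
   K, R(z) acts on these polynomials as the divided-difference operator
     f |-> (a + x/(y-x)) f(x,y) + (b - y/(y-x)) f(y,x),  a = 1/(1-q^2), b = z^2/(z^2-1),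
   and K(z) on the first factor as
     f |-> (c + x/(1-x)) f(x,y) + (d - 1/(1-x)) x^(N-1) f(1/x,y),  c = 1/(1-z^4), d = 1/(1-r^2).
   The reflection equation for these operators is an identity of rational
   functions in the values of f on the orbit of (x,y) under swapping and
   inverting the variables; since a polynomial is determined by its values at
   generic points, it yields the matrix identity. *)

From HB Require Import structures.
From mathcomp Require Import all_boot all_order all_algebra.
From mathcomp Require Import zify ring.
Import Order.TTheory GRing.Theory Num.Theory.
Set Implicit Arguments. Unset Strict Implicit. Unset Printing Implicit Defensive.
Local Open Scope ring_scope.

Section IndicatorSums.
Variable R : comPzRingType.
Variable N : nat.

Lemma sum_ord_indicator (F : 'I_N -> R) (j : 'I_N) :
  \sum_(l < N) (l == j)%:R * F l = F j.
Proof.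
rewrite (bigD1 j) //= eqxx mul1r big1 ?addr0 // => l /negbTE ->.
by rewrite mul0r.
Qed.

Lemma sum_nat_indicator (F : nat -> R) m : (m < N)%N ->
  \sum_(l < N) ((l : nat) == m)%:R * F l = F m.
Proof. by move=> ltmN; rewrite (sum_ord_indicator (fun l => F l) (Ordinal ltmN)). Qed.

Lemma sum_ord_indicator2 (F : 'I_N -> 'I_N -> R) (i j : 'I_N) :
  \sum_(k < N) \sum_(l < N) ((k == i) && (l == j))%:R * F k l = F i j.
Proof.
rewrite -(sum_ord_indicator (fun k => F k j) i); apply: eq_bigr => k _.
rewrite -(sum_ord_indicator (F k) j) mulr_sumr; apply: eq_bigr => l _.
by rewrite -mulnb natrM mulrA.
Qed.

Lemma sum_ord_window (F : nat -> R) a b : (b <= N)%N ->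
  \sum_(k < N) (a < k < b)%N%:R * F k = \sum_(a.+1 <= k < b) F k.
Proof.
move=> lebN; rewrite -(big_mkord xpredT (fun k => (a < k < b)%N%:R * F k)).
rewrite [RHS](big_nat_widen _ _ N) // [RHS](big_nat_widenl _ 0) // [RHS]big_mkcond.
apply: eq_bigr => k _ /=; rewrite [in RHS]andbC.
by case: (a < k < b)%N; rewrite ?mul1r ?mul0r.
Qed.

Lemma sum_window_geometric (x y : R) a b : (a < b)%N ->
  (y - x) * \sum_(a.+1 <= k < b) x ^+ k * y ^+ (a + b - k) =
  x ^+ a.+1 * y ^+ b - x ^+ b * y ^+ a.+1.
Proof.
elim: b => // b IH ltab1.
case: (ltngtP a b) => [ltab | ltba | <-]; [| lia | by rewrite big_geq // mulr0 subrr].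
rewrite (big_nat_recr _ _ _ ltab) /= (_ : (a + b.+1 - b = a.+1)%N); last by lia.
have -> : \sum_(a.+1 <= k < b) x ^+ k * y ^+ (a + b.+1 - k) =
          y * \sum_(a.+1 <= k < b) x ^+ k * y ^+ (a + b - k).
  rewrite mulr_sumr big_nat_cond [RHS]big_nat_cond.
  apply: eq_bigr => k /andP [/andP [_ ltkb] _].
  by rewrite (_ : a + b.+1 - k = (a + b - k).+1)%N ?exprS; [ring | lia].
by rewrite mulrDr mulrCA IH // !exprS; ring.
Qed.

Lemma sum_ord_antidiagonal (F : nat -> nat -> R) a b : (a < N)%N -> (b < N)%N ->
  \sum_(k < N) \sum_(l < N)
     ((minn a b < k < maxn a b) && (a + b == k + l))%N%:R * F k l
  = \sum_((minn a b).+1 <= k < maxn a b) F k (a + b - k)%N.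
Proof.
move=> ltaN ltbN; rewrite -sum_ord_window; last by lia.
apply: eq_bigr => k _; have [hk | _] /= := boolP (minn a b < k < maxn a b)%N; last first.
  by rewrite mul0r big1 // => l _; rewrite mul0r.
rewrite mul1r -(@sum_nat_indicator (F k) (a + b - k)%N); last by lia.
apply: eq_bigr => l _; congr ((nat_of_bool _)%:R * _); apply/idP/idP; lia.
Qed.

End IndicatorSums.

Section Entries.
Variable C : fieldType.
Variable N : nat.
Implicit Types (z q p r s : C) (i j k l : 'I_N).

Lemma Rtr_twist z q p i j k l :
  Rtr z q p i j k l = p ^ ((j%:Z - k%:Z) * 2) * Rtr z q 1 i j k l.
Proof. by rewrite /Rtr exp1rz mul1r. Qed.

Lemma Ktr_twist z r s j k :
  Ktr z r s j k = s ^ (j%:Z - k%:Z) * Ktr z r 1 j k.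
Proof. by rewrite /Ktr exp1rz mul1r. Qed.

Lemma Rtr1E z q i j k l :
  Rtr z q 1 i j k l =
    ((k == i) && (l == j))%:R *
      (if i == j then (q * z^-1 - q^-1 * z) / ((q - q^-1) * (z - z^-1))
       else - q ^ sgz (i%:Z - j%:Z) / (q - q^-1))
  + ((k == j) && (l == i))%:R *
      ((i != j)%:R * (z ^ sgz (j%:Z - i%:Z) / (z - z^-1)))
  + ((minn i j < k < maxn i j) && (i + j == k + l))%N%:R *
      sgnC C (j%:Z - i%:Z).
Proof.
rewrite /Rtr exp1rz mul1r.
have -> : (Num.min i%:Z j%:Z < k%:Z < Num.max i%:Z j%:Z)
            && (i%:Z + j%:Z == k%:Z + l%:Z)
          = ((minn i j < k < maxn i j) && (i + j == k + l))%N.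
  by apply/idP/idP; lia.
rewrite -!(inj_eq val_inj) /=.
move: (i : nat) (j : nat) (k : nat) (l : nat) => {}i {}j {}k {}l.
case: ifP => h1; [|case: ifP => h2; [|case: ifP => h3; [|case: ifP => h4]]];
case: (boolP ((k == i) && (l == j))) => b1;
case: (boolP ((k == j) && (l == i))) => b2;
case: (boolP ((minn i j < k < maxn i j) && (i + j == k + l))%N) => b3;
rewrite /= ?mul1r ?mul0r ?addr0 ?add0r //; try (exfalso; lia).
all: have [eqij | neij] /= := eqVneq i j; rewrite ?mul1r ?mul0r ?addr0 //; lia.
Qed.

Lemma Ktr1E z r j k :
  Ktr z r 1 j k =
    (k == j)%:R *
      (if (j * 2 + 1 == N)%N then (r^-1 * z^-2 - r * z ^+ 2) / ((r - r^-1) * (z ^+ 2 - z^-2))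
       else - (z ^+ 2) ^ sgz (j%:Z * 2 - N%:Z + 1) / (z ^+ 2 - z^-2))
  + ((k == (N - 1 - j)%N :> nat) && (k != j))%:R *
      (- r ^ sgz (j%:Z * 2 - N%:Z + 1) / (r - r^-1))
  + (minn j (N - 1 - j) < k < maxn j (N - 1 - j))%N%:R *
      sgnC C (N%:Z - 1 - j%:Z * 2).
Proof.
rewrite /Ktr exp1rz mul1r -!(inj_eq val_inj) /=.
move: (ltn_ord j) (ltn_ord k); move: (j : nat) (k : nat) => {}j {}k ltjN ltkN.
case: ifP => h1; [|case: ifP => h2; [|case: ifP => h3; [|case: ifP => h4]]];
case: (boolP (k == j)) => b1;
case: (boolP (k == N - 1 - j)%N) => b2;
case: (boolP (minn j (N - 1 - j) < k < maxn j (N - 1 - j))%N) => b3;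
rewrite /= ?mul1r ?mul0r ?addr0 ?add0r //; try (exfalso; lia).
all: case: ifP => //; lia.
Qed.

End Entries.

Section Operators.
Variable C : fieldType.
Implicit Types (f : C -> C -> C) (al dl t x y : C).

Definition rkeep al x y := al + x / (y - x).
Definition rswap t x y := t / (t - 1) - y / (y - x).
Definition kkeep t x := - (t ^+ 2 - 1)^-1 + x / (1 - x).
Definition kflip dl x := dl - (1 - x)^-1.

Definition Rop al t f x y := rkeep al x y * f x y + rswap t x y * f y x.

Definition R21op al t f x y := Rop al t (fun a b => f b a) y x.

Definition K1op (n : nat) dl t f x y :=
  kkeep t x * f x y + kflip dl x * (x ^+ n * f x^-1 y).

Definition K2op n dl t f x y := K1op n dl t (fun a b => f b a) y x.

End Operators.

Section MonomialAction.
Variable C : fieldType.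
Variable N : nat.
Implicit Types (z q r x y : C) (i j : 'I_N).

Lemma Rtr1_monomial z q x y i j :
  q != 0 -> q ^+ 2 != 1 -> z != 0 -> z ^+ 2 != 1 -> x != y ->
  \sum_(k < N) \sum_(l < N) Rtr z q 1 i j k l * (x ^+ k * y ^+ l) =
  Rop (- (q ^+ 2 - 1)^-1) (z ^+ 2) (fun a b => a ^+ i * b ^+ j) x y.
Proof.
move=> q0 q2 z0 z2 neqxy.
under eq_bigr do under eq_bigr do rewrite Rtr1E.
set A := (if _ then _ else _); set B := (_%:R * _); set D := sgnC _ _.
under eq_bigr do under eq_bigr do rewrite !mulrDl -!mulrA.
under eq_bigr do rewrite !big_split.
rewrite !big_split !sum_ord_indicator2 /=.
rewrite (sum_ord_antidiagonal (fun k l => _ * (x ^+ k * y ^+ l))) //.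
rewrite -mulr_sumr /Rop /rkeep /rswap /A /B /D {A B D} /sgnC.
have yx0 : y - x != 0 by rewrite subr_eq0 eq_sym.
have geom a b : (a < b)%N ->
    \sum_(a.+1 <= k < b) x ^+ k * y ^+ (a + b - k) =
    (x ^+ a.+1 * y ^+ b - x ^+ b * y ^+ a.+1) / (y - x).
  by move=> ltab; rewrite -(sum_window_geometric _ _ ltab) mulrC mulKf.
case: (ltngtP i j) => [ltij | ltji | eqij].
- have neij : (i == j) = false := ltn_eqF ltij.
  rewrite geom // neij.
  have -> : sgz (i%:Z - j%:Z) = -1 by apply: ltr0_sgz; lia.
  have -> : sgz (j%:Z - i%:Z) = 1 by apply: gtr0_sgz; lia.
  rewrite /= mulr1z exprN1 expr1z !exprS; field; by rewrite ?yx0 ?q0 ?z0 -?expr2 ?subr_eq0 ?q2 ?z2.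
- have neij : (i == j) = false := gtn_eqF ltji.
  rewrite [(i + j)%N]addnC geom // neij.
  have -> : sgz (i%:Z - j%:Z) = 1 by apply: gtr0_sgz; lia.
  have -> : sgz (j%:Z - i%:Z) = -1 by apply: ltr0_sgz; lia.
  rewrite /= mulrN1z exprN1 expr1z !exprS; field; by rewrite ?yx0 ?q0 ?z0 -?expr2 ?subr_eq0 ?q2 ?z2.
- rewrite big_geq // mulr0 addr0 (_ : i == j); last by apply/eqP/val_inj.
  rewrite /= mul0r addr0 eqij; field; by rewrite ?yx0 ?q0 ?z0 -?expr2 ?subr_eq0 ?q2 ?z2.
Qed.

Lemma Ktr1_monomial z r x j :
  r != 0 -> r ^+ 2 != 1 -> z != 0 -> (z ^+ 2) ^+ 2 != 1 -> x != 1 ->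
  \sum_(k < N) Ktr z r 1 j k * x ^+ k =
  kkeep (z ^+ 2) x * x ^+ j + kflip (- (r ^+ 2 - 1)^-1) x * x ^+ (N - 1 - j).
Proof.
move=> r0 r2 z0 z4 x1; have ltjN := ltn_ord j.
under eq_bigr do rewrite Ktr1E.
set A := (if _ then _ else _); set B := (- r ^ _ / _); set D := sgnC _ _.
set m := (N - 1 - j)%N.
rewrite (eq_bigr (fun k : 'I_N => (k == j)%:R * (A * x ^+ k)
    + ((k : nat) == m)%:R * ((m != j)%:R * B * x ^+ m)
    + (minn j m < k < maxn j m)%N%:R * (D * x ^+ k))); last first.
  by move=> k _; rewrite -(inj_eq val_inj) /=; have [-> | _] /= := eqVneq (k : nat) m; ring.
rewrite !big_split /= sum_ord_indicator.
rewrite (sum_nat_indicator (fun => (m != j)%:R * B * x ^+ m)); last by lia.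
rewrite (sum_ord_window (fun k => D * x ^+ k)) -?mulr_sumr; last by lia.
rewrite /kkeep /kflip /A /B /D /m {A B D m} /sgnC.
have x10 : 1 - x != 0 by rewrite subr_eq0 eq_sym.
have geom a b : (a < b)%N -> \sum_(a.+1 <= k < b) x ^+ k = (x ^+ a.+1 - x ^+ b) / (1 - x).
  move=> ltab; rewrite -[LHS](mulKf x10) (eq_bigr (fun k => x ^+ k * 1 ^+ (a + b - k))).
    by rewrite sum_window_geometric // !expr1n !mulr1 mulrC.
  by move=> k _; rewrite expr1n mulr1.
case: (ltngtP j (N - 1 - j)%N) => [ltjj | ltjj | eqjj].
- rewrite geom // (_ : (j * 2 + 1 == N)%N = false); last by lia.
  have -> : sgz (j%:Z * 2 - N%:Z + 1) = -1 by apply: ltr0_sgz; lia.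
  have -> : sgz (N%:Z - 1 - j%:Z * 2) = 1 by apply: gtr0_sgz; lia.
  rewrite /= mul1r mulr1z !exprN1 !exprS; field.
  by rewrite ?x10 ?r0 ?z0 -?expr2 ?subr_eq0 ?z4 ?r2.
- rewrite geom // (_ : (j * 2 + 1 == N)%N = false); last by lia.
  have -> : sgz (j%:Z * 2 - N%:Z + 1) = 1 by apply: gtr0_sgz; lia.
  have -> : sgz (N%:Z - 1 - j%:Z * 2) = -1 by apply: ltr0_sgz; lia.
  rewrite /= mul1r mulrN1z !expr1z !exprS; field.
  by rewrite ?x10 ?r0 ?z0 -?expr2 ?subr_eq0 ?z4 ?r2.
- rewrite big_geq; last by lia.
  rewrite (_ : (j * 2 + 1 == N)%N = true); last by lia.
  rewrite -eqjj /= mulr0 addr0 !mul0r addr0; field.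
  by rewrite ?x10 ?r0 ?z0 -?expr2 ?subr_eq0 ?z4 ?r2.
Qed.

End MonomialAction.

Section GeneratingFunctions.
Variable C : fieldType.
Variable N : nat.
Implicit Types (A B M : endo2 C N) (u : 'I_N -> 'I_N -> C) (i j k l : 'I_N).

Definition act2 A u : 'I_N -> 'I_N -> C :=
  fun k l => \sum_(i < N) \sum_(j < N) u i j * A i j k l.

Definition genfun u (x y : C) : C :=
  \sum_(i < N) \sum_(j < N) u i j * (x ^+ i * y ^+ j).

Lemma exchange_big2 (F : 'I_N -> 'I_N -> 'I_N -> 'I_N -> C) :
  \sum_(a < N) \sum_(b < N) \sum_(c < N) \sum_(d < N) F a b c d =
  \sum_(c < N) \sum_(d < N) \sum_(a < N) \sum_(b < N) F a b c d.
Proof.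
under eq_bigr do rewrite exchange_big.
rewrite exchange_big; apply: eq_bigr => c _.
by under eq_bigr do rewrite exchange_big; rewrite exchange_big.
Qed.

Lemma act2_comp A B u k l : act2 (comp2 A B) u k l = act2 A (act2 B u) k l.
Proof.
rewrite /act2 /comp2.
under eq_bigr do under eq_bigr do rewrite mulr_sumr.
under eq_bigr do under eq_bigr do under eq_bigr do rewrite mulr_sumr.
rewrite exchange_big2; apply: eq_bigr => c _; apply: eq_bigr => d _.
rewrite mulr_suml; apply: eq_bigr => a _; rewrite mulr_suml; apply: eq_bigr => b _.
by rewrite mulrA.
Qed.

Lemma act2_delta M i j k l :
  act2 M (fun a b => ((a == i) && (b == j))%:R) k l = M i j k l.
Proof. exact: (sum_ord_indicator2 (fun a b => M a b k l)). Qed.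

Lemma genfun_act2 A u x y :
  genfun (act2 A u) x y =
  \sum_(i < N) \sum_(j < N) u i j * \sum_(k < N) \sum_(l < N) A i j k l * (x ^+ k * y ^+ l).
Proof.
rewrite /genfun /act2.
under eq_bigr do under eq_bigr do rewrite mulr_suml.
under eq_bigr do under eq_bigr do under eq_bigr do rewrite mulr_suml.
rewrite exchange_big2; apply: eq_bigr => a _; apply: eq_bigr => b _.
rewrite mulr_sumr; apply: eq_bigr => c _; rewrite mulr_sumr; apply: eq_bigr => d _.
by rewrite -mulrA.
Qed.

Lemma op21E A i j k l : op21 A i j k l = A j i l k.
Proof.
rewrite /op21 /comp2 /flip2.
under eq_bigr do under eq_bigr do rewrite (sum_ord_indicator2 (fun a b => A a b _ _)).
rewrite -(sum_ord_indicator2 (A j i) l k).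
by apply: eq_bigr => a _; apply: eq_bigr => b _; rewrite mulrC andbC (eq_sym k) (eq_sym l).
Qed.

Lemma genfun_act2_comp A B u (x y : C) :
  genfun (act2 (comp2 A B) u) x y = genfun (act2 A (act2 B u)) x y.
Proof. by apply: eq_bigr => i _; apply: eq_bigr => j _; rewrite act2_comp. Qed.

End GeneratingFunctions.

Section GenericPoints.
Variable C : fieldType.
Implicit Types (f g h : C -> C -> C) (x y : C).

Definition generic x y := [&& x != 0, y != 0, x != 1, y != 1, x != y & x * y != 1].

Lemma generic_sym x y : generic x y -> generic y x.
Proof.
case/and5P=> x0 y0 x1 y1 /andP[nexy nexy1].
by rewrite /generic x0 y0 x1 y1 eq_sym nexy mulrC nexy1.
Qed.

Lemma generic_invl x y : generic x y -> generic x^-1 y.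
Proof.
case/and5P=> x0 y0 x1 y1 /andP[nexy nexy1].
rewrite /generic invr_eq0 invr_eq1 x0 y0 x1 y1 /=; apply/andP; split.
  by apply: contra nexy1 => /eqP <-; rewrite mulfV.
apply: contra nexy => /eqP xVy1; apply/eqP.
by rewrite -[y]mul1r -(mulfV x0) -mulrA xVy1 mulr1.
Qed.

Lemma generic_invr x y : generic x y -> generic x y^-1.
Proof. by move/generic_sym/generic_invl/generic_sym. Qed.

Definition generic_eq f g := forall x y, generic x y -> f x y = g x y.

Lemma generic_eq_trans f g h : generic_eq f g -> generic_eq g h -> generic_eq f h.
Proof. by move=> efg egh x y gxy; rewrite efg // egh. Qed.

Lemma Rop_generic_eq al t f g : generic_eq f g -> generic_eq (Rop al t f) (Rop al t g).
Proof. by move=> efg x y gxy; rewrite /Rop !efg //; apply: generic_sym. Qed.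

Lemma R21op_generic_eq al t f g : generic_eq f g -> generic_eq (R21op al t f) (R21op al t g).
Proof. by move=> efg x y gxy; rewrite /R21op /Rop !efg //; apply: generic_sym. Qed.

Lemma K1op_generic_eq n dl t f g : generic_eq f g -> generic_eq (K1op n dl t f) (K1op n dl t g).
Proof. by move=> efg x y gxy; rewrite /K1op !efg //; apply: generic_invl. Qed.

Lemma K2op_generic_eq n dl t f g : generic_eq f g -> generic_eq (K2op n dl t f) (K2op n dl t g).
Proof. by move=> efg x y gxy; rewrite /K2op /K1op !efg //; apply: generic_invr. Qed.

Lemma generic_eq_sandwich f g (f' g' : C -> C -> C) :
  generic_eq f f' -> generic_eq g g' -> generic_eq f' g' -> generic_eq f g.
Proof. by move=> ef eg e' x y gxy; rewrite ef // eg // e'. Qed.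

End GenericPoints.

Section GeneratingFunctionAction.
Variable C : fieldType.
Variable N : nat.
Implicit Types (u : 'I_N -> 'I_N -> C) (z q r : C).

Lemma genfun_Rtr1 z q u :
  q != 0 -> q ^+ 2 != 1 -> z != 0 -> z ^+ 2 != 1 ->
  generic_eq (genfun (act2 (Rtr z q 1) u)) (Rop (- (q ^+ 2 - 1)^-1) (z ^+ 2) (genfun u)).
Proof.
move=> q0 q2 z0 z2 x y /and5P [_ _ _ _ /andP [neqxy _]]; rewrite genfun_act2.
under eq_bigr do under eq_bigr do rewrite Rtr1_monomial //.
rewrite /Rop /genfun !mulr_sumr -big_split; apply: eq_bigr => i _.
by rewrite !mulr_sumr -big_split; apply: eq_bigr => j _; rewrite /=; ring.
Qed.

Lemma genfun_op21_Rtr1 z q u :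
  q != 0 -> q ^+ 2 != 1 -> z != 0 -> z ^+ 2 != 1 ->
  generic_eq (genfun (act2 (op21 (Rtr z q 1)) u)) (R21op (- (q ^+ 2 - 1)^-1) (z ^+ 2) (genfun u)).
Proof.
move=> q0 q2 z0 z2 x y /and5P [_ _ _ _ /andP [neqxy _]]; rewrite genfun_act2.
have swap i j : \sum_(k < N) \sum_(l < N) op21 (Rtr z q 1) i j k l * (x ^+ k * y ^+ l)
    = \sum_(k < N) \sum_(l < N) Rtr z q 1 j i k l * (y ^+ k * x ^+ l).
  rewrite exchange_big; apply: eq_bigr => k _; apply: eq_bigr => l _.
  by rewrite op21E [x ^+ _ * _]mulrC.
have neqyx : y != x by rewrite eq_sym.
under eq_bigr do under eq_bigr do rewrite swap Rtr1_monomial //.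
rewrite /R21op /Rop /genfun !mulr_sumr -big_split; apply: eq_bigr => i _.
by rewrite !mulr_sumr -big_split; apply: eq_bigr => j _; rewrite /=; ring.
Qed.

Lemma genfun_K1_Ktr1 z r u :
  r != 0 -> r ^+ 2 != 1 -> z != 0 -> (z ^+ 2) ^+ 2 != 1 ->
  generic_eq (genfun (act2 (K1 (Ktr z r 1)) u))
    (K1op (N - 1) (- (r ^+ 2 - 1)^-1) (z ^+ 2) (genfun u)).
Proof.
move=> r0 r2 z0 z4 x y /and5P [x0 _ x1 _ _]; rewrite genfun_act2.
have factor i j : \sum_(k < N) \sum_(l < N) K1 (Ktr z r 1) i j k l * (x ^+ k * y ^+ l)
    = (\sum_(k < N) Ktr z r 1 i k * x ^+ k) * y ^+ j.
  rewrite mulr_suml; apply: eq_bigr => k _.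
  rewrite -mulrA -(sum_ord_indicator (fun l => Ktr z r 1 i k * (x ^+ k * y ^+ l)) j).
  by apply: eq_bigr => l _; rewrite /K1; ring.
under eq_bigr do under eq_bigr do rewrite factor Ktr1_monomial //.
rewrite /K1op /genfun !mulr_sumr -big_split; apply: eq_bigr => i _.
rewrite !mulr_sumr -big_split; apply: eq_bigr => j _.
have leiN : (i <= N - 1)%N by have := ltn_ord i; lia.
by rewrite /= exprVn (exprB leiN) ?unitfE //; ring.
Qed.

Lemma genfun_K2_Ktr1 z r u :
  r != 0 -> r ^+ 2 != 1 -> z != 0 -> (z ^+ 2) ^+ 2 != 1 ->
  generic_eq (genfun (act2 (K2 (Ktr z r 1)) u))
    (K2op (N - 1) (- (r ^+ 2 - 1)^-1) (z ^+ 2) (genfun u)).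
Proof.
move=> r0 r2 z0 z4 x y /and5P [_ y0 _ y1 _]; rewrite genfun_act2.
have factor i j : \sum_(k < N) \sum_(l < N) K2 (Ktr z r 1) i j k l * (x ^+ k * y ^+ l)
    = x ^+ i * \sum_(l < N) Ktr z r 1 j l * y ^+ l.
  rewrite -(sum_ord_indicator (fun k => x ^+ k * \sum_(l < N) Ktr z r 1 j l * y ^+ l) i).
  by apply: eq_bigr => k _; rewrite !mulr_sumr; apply: eq_bigr => l _; rewrite /K2; ring.
under eq_bigr do under eq_bigr do rewrite factor Ktr1_monomial //.
rewrite /K2op /K1op /genfun !mulr_sumr -big_split; apply: eq_bigr => i _.
rewrite !mulr_sumr -big_split; apply: eq_bigr => j _.
have lejN : (j <= N - 1)%N by have := ltn_ord j; lia.
by rewrite /= exprVn (exprB lejN) ?unitfE //; ring.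
Qed.

End GeneratingFunctionAction.

Section OperatorIdentity.
Variable C : fieldType.
Implicit Types (f : C -> C -> C) (x y : C).

Lemma reflection_operator_identity al dl a c n f x y :
  generic x y -> a != 0 -> c != 0 -> a != c -> a * c != 1 -> a ^+ 2 != 1 -> c ^+ 2 != 1 ->
  Rop al (a / c) (K1op n dl a (R21op al (a * c) (K2op n dl c f))) x y =
  K2op n dl c (Rop al (a * c) (K1op n dl a (R21op al (a / c) f))) x y.
Proof.
case/and5P=> x0 y0 x1 y1 /andP[nexy nexy1] a0 c0 neac neac1 a2 c2.
rewrite /R21op /K2op /Rop /K1op /= !invrK !exprVn.
have xn0 : x ^+ n != 0 by rewrite expf_neq0.
have yn0 : y ^+ n != 0 by rewrite expf_neq0.
set X := x ^+ n in xn0 *; set Y := y ^+ n in yn0 *.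
(* Collect the coefficients of f at the eight points of the orbit of (x, y) and
   compare them one at a time: a single field call on the whole identity
   produces a proof term too large to be rechecked. *)
transitivity (
    (rkeep al x y * kkeep a x * rkeep al y x * kkeep c y +
     rswap (a / c) x y * kkeep a y * rswap (a * c) x y * kkeep c y +
     rswap (a / c) x y * kflip dl y * Y * rswap (a * c) x y^-1 * kflip dl y^-1 * Y^-1) * f x y +
    (rkeep al x y * kkeep a x * rkeep al y x * kflip dl y * Y +
     rswap (a / c) x y * kkeep a y * rswap (a * c) x y * kflip dl y * Y +
     rswap (a / c) x y * kflip dl y * Y * rswap (a * c) x y^-1 * kkeep c y^-1) * f x y^-1 +
    (rkeep al x y * kkeep a x * rswap (a * c) y x * kkeep c x +
     rkeep al x y * kflip dl x * X * rswap (a * c) y x^-1 * kflip dl x^-1 * X^-1 +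
     rswap (a / c) x y * kkeep a y * rkeep al x y * kkeep c x) * f y x +
    (rkeep al x y * kkeep a x * rswap (a * c) y x * kflip dl x * X +
     rkeep al x y * kflip dl x * X * rswap (a * c) y x^-1 * kkeep c x^-1 +
     rswap (a / c) x y * kkeep a y * rkeep al x y * kflip dl x * X) * f y x^-1 +
    (rkeep al x y * kflip dl x * X * rkeep al y x^-1 * kkeep c y) * f x^-1 y +
    (rkeep al x y * kflip dl x * X * rkeep al y x^-1 * kflip dl y * Y) * f x^-1 y^-1 +
    (rswap (a / c) x y * kflip dl y * Y * rkeep al x y^-1 * kkeep c x) * f y^-1 x +
    (rswap (a / c) x y * kflip dl y * Y * rkeep al x y^-1 * kflip dl x * X) * f y^-1 x^-1).
  by ring.
transitivity (
    (kkeep c y * rkeep al x y * kkeep a x * rkeep al y x +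
     kkeep c y * rswap (a * c) x y * kkeep a y * rswap (a / c) x y +
     kflip dl y * Y * rswap (a * c) x y^-1 * kflip dl y^-1 * Y^-1 * rswap (a / c) x y) * f x y +
    (kkeep c y * rswap (a * c) x y * kflip dl y * Y * rswap (a / c) x y^-1 +
     kflip dl y * Y * rkeep al x y^-1 * kkeep a x * rkeep al y^-1 x +
     kflip dl y * Y * rswap (a * c) x y^-1 * kkeep a y^-1 * rswap (a / c) x y^-1) * f x y^-1 +
    (kkeep c y * rkeep al x y * kkeep a x * rswap (a / c) y x +
     kkeep c y * rswap (a * c) x y * kkeep a y * rkeep al x y +
     kflip dl y * Y * rswap (a * c) x y^-1 * kflip dl y^-1 * Y^-1 * rkeep al x y) * f y x +
    (kkeep c y * rkeep al x y * kflip dl x * X * rswap (a / c) y x^-1) * f y x^-1 +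
    (kkeep c y * rkeep al x y * kflip dl x * X * rkeep al y x^-1) * f x^-1 y +
    (kflip dl y * Y * rkeep al x y^-1 * kflip dl x * X * rkeep al y^-1 x^-1) * f x^-1 y^-1 +
    (kkeep c y * rswap (a * c) x y * kflip dl y * Y * rkeep al x y^-1 +
     kflip dl y * Y * rkeep al x y^-1 * kkeep a x * rswap (a / c) y^-1 x +
     kflip dl y * Y * rswap (a * c) x y^-1 * kkeep a y^-1 * rkeep al x y^-1) * f y^-1 x +
    (kflip dl y * Y * rkeep al x y^-1 * kflip dl x * X * rswap (a / c) y^-1 x^-1) * f y^-1 x^-1).
  2: by ring.
congr (_ * _ + _ * _ + _ * _ + _ * _ + _ * _ + _ * _ + _ * _ + _ * _);
  rewrite /rkeep /rswap /kkeep /kflip; field;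
  by rewrite ?mulN1r ?mulNr ?subr_eq0 ?(eq_sym 1) ?(eq_sym y x) ?(mulrC y x)
    ?xn0 ?yn0 ?x0 ?y0 ?x1 ?y1 ?nexy ?nexy1 ?a0 ?c0 ?neac ?neac1 ?a2 ?c2.
Qed.

End OperatorIdentity.

Section Injectivity.
Variable C : numFieldType.
Variable N : nat.

Lemma coef_eq0_of_roots (c : 'I_N -> C) (t : nat -> C) :
  (forall a b, (a < N)%N -> (b < N)%N -> t a = t b -> a = b) ->
  (forall a, (a < N)%N -> \sum_(k < N) c k * t a ^+ k = 0) -> forall k, c k = 0.
Proof.
move=> tinj troot k.
pose P := \poly_(n < N) (if insub n is Some o then c o else 0).
have cP (o : 'I_N) : P`_o = c o by rewrite coef_poly ltn_ord valK.
suff P0 : P = 0 by rewrite -cP P0 coef0.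
apply/eqP; apply: contraT => /max_poly_roots roots.
have /roots : all (root P) (mkseq t N).
  apply/allP => v /mapP [a]; rewrite mem_iota => /andP [_ ltaN] ->.
  rewrite /root horner_poly; apply/eqP; rewrite -[RHS](troot a ltaN).
  by apply: eq_bigr => o _; rewrite valK.
rewrite size_mkseq ltnNge size_poly; apply.
rewrite map_inj_in_uniq ?iota_uniq // => a b.
by rewrite !mem_iota => /andP [_ ltaN] /andP [_ ltbN]; apply: tinj.
Qed.

Lemma genfun_generic_inj (v w : 'I_N -> 'I_N -> C) :
  generic_eq (genfun v) (genfun w) -> forall k l, v k l = w k l.
Proof.
move=> evw k l; apply/eqP; rewrite -subr_eq0; apply/eqP.
pose d a b := v a b - w a b.
have dsum x y : generic x y -> \sum_(a < N) (\sum_(b < N) d a b * y ^+ b) * x ^+ a = 0.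
  move/evw/eqP; rewrite -subr_eq0 /genfun -sumrB => /eqP diff0; rewrite -[RHS]diff0.
  apply: eq_bigr => a _; rewrite mulr_suml -sumrB; apply: eq_bigr => b _; rewrite /d; ring.
pose t n : C := (n + 2)%:R; pose s n : C := (N + 2 + n)%:R.
have gts a b : (a < N)%N -> generic (t a) (s b).
  by move=> ltaN; rewrite /generic /t /s -natrM !pnatr_eq0 !pnatr_eq1 !eqr_nat; lia.
have tinj a b : (a < N)%N -> (b < N)%N -> t a = t b -> a = b.
  by move=> _ _ /eqP; rewrite eqr_nat; lia.
have sinj a b : (a < N)%N -> (b < N)%N -> s a = s b -> a = b.
  by move=> _ _ /eqP; rewrite eqr_nat; lia.
have drow b : (b < N)%N -> forall a, \sum_(l < N) d a l * s b ^+ l = 0.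
  by move=> ltbN; apply: (coef_eq0_of_roots tinj) => a ltaN; apply/dsum/gts.
exact: (coef_eq0_of_roots sinj (fun b ltbN => drow b ltbN k)).
Qed.

End Injectivity.

Lemma reflection_equation_untwisted (C : numFieldType) N (q r z w : C) :
  q != 0 -> r != 0 -> q ^+ 2 != 1 -> r ^+ 2 != 1 -> z != 0 -> w != 0 ->
  (z / w) ^+ 2 != 1 -> (z * w) ^+ 2 != 1 -> z ^+ 4 != 1 -> w ^+ 4 != 1 ->
  forall i j k l : 'I_N,
    comp2 (comp2 (comp2 (Rtr (z / w) q 1) (K1 (Ktr z r 1)))
                 (op21 (Rtr (z * w) q 1))) (K2 (Ktr w r 1)) i j k l
    = comp2 (comp2 (comp2 (K2 (Ktr w r 1)) (Rtr (z * w) q 1))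
                   (K1 (Ktr z r 1))) (op21 (Rtr (z / w) q 1)) i j k l.
Proof.
move=> q0 r0 q2 r2 z0 w0 zdivw2 zmulw2 z4 w4 i j k l.
rewrite -!(act2_delta _ i j k l); move: k l; apply: genfun_generic_inj.
have {}z4 : (z ^+ 2) ^+ 2 != 1 by rewrite -exprM.
have {}w4 : (w ^+ 2) ^+ 2 != 1 by rewrite -exprM.
have zdivw0 : z / w != 0 by rewrite mulf_neq0 ?invr_eq0.
have zmulw0 : z * w != 0 by rewrite mulf_neq0.
move=> x y gxy; rewrite !genfun_act2_comp; move: x y gxy.
eapply generic_eq_sandwich.
- eapply generic_eq_trans; first exact: genfun_Rtr1 q0 q2 zdivw0 zdivw2.
  apply: Rop_generic_eq; eapply generic_eq_trans; first exact: genfun_K1_Ktr1 r0 r2 z0 z4.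
  apply: K1op_generic_eq; eapply generic_eq_trans;
    first exact: genfun_op21_Rtr1 q0 q2 zmulw0 zmulw2.
  exact/R21op_generic_eq/genfun_K2_Ktr1.
- eapply generic_eq_trans; first exact: genfun_K2_Ktr1 r0 r2 w0 w4.
  apply: K2op_generic_eq; eapply generic_eq_trans; first exact: genfun_Rtr1 q0 q2 zmulw0 zmulw2.
  apply: Rop_generic_eq; eapply generic_eq_trans; first exact: genfun_K1_Ktr1 r0 r2 z0 z4.
  exact/K1op_generic_eq/genfun_op21_Rtr1.
move=> x y gxy; rewrite expr_div_n exprMn; apply: reflection_operator_identity => //.
- by rewrite expf_neq0.
- by rewrite expf_neq0.
- by apply: contra zdivw2 => /eqP e; rewrite expr_div_n e divff // expf_neq0.
- by rewrite -exprMn.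
Qed.

Section Twist.
Variable C : fieldType.
Variable N : nat.
Implicit Types (z q r s : C) (K : endo1 C N) (i j k l : 'I_N).

Lemma K1_support K i j k l : K1 K i j k l != 0 -> l = j.
Proof. by rewrite /K1; have [// | _] := eqVneq l j; rewrite mulr0 eqxx. Qed.

Lemma K2_support K i j k l : K2 K i j k l != 0 -> k = i.
Proof. by rewrite /K2; have [// | _] := eqVneq k i; rewrite mul0r eqxx. Qed.

Lemma Rtr1_weight z q i j k l : Rtr z q 1 i j k l != 0 -> (i + j = k + l)%N.
Proof.
move=> nz; apply/eqP; apply: contraNT nz => neq_weight; rewrite Rtr1E.
have -> : (k == i) && (l == j) = false.
  by apply: contraNF neq_weight => /andP [/eqP -> /eqP ->].
have -> : (k == j) && (l == i) = false.
  by apply: contraNF neq_weight => /andP [/eqP -> /eqP ->]; rewrite addnC.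
by rewrite (negbTE neq_weight) andbF !mul0r !addr0.
Qed.

Lemma K1_twist z r s i j k l :
  K1 (Ktr z r s) i j k l = s ^ (i%:Z - k%:Z) * K1 (Ktr z r 1) i j k l.
Proof. by rewrite /K1 Ktr_twist -mulrA. Qed.

Lemma K2_twist z r s i j k l :
  K2 (Ktr z r s) i j k l = s ^ (j%:Z - l%:Z) * K2 (Ktr z r 1) i j k l.
Proof. by rewrite /K2 Ktr_twist mulrCA. Qed.

Lemma mul4_twist (x1 x2 x3 x4 g1 g2 g3 g4 g : C) :
  (x1 != 0 -> x2 != 0 -> x3 != 0 -> x4 != 0 -> g1 * g2 * g3 * g4 = g) ->
  g1 * x1 * (g2 * x2 * (g3 * x3 * (g4 * x4))) = g * (x1 * (x2 * (x3 * x4))).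
Proof.
move=> hg; have [-> | x1_0] := eqVneq x1 0; first by rewrite !(mulr0, mul0r).
have [-> | x2_0] := eqVneq x2 0; first by rewrite !(mulr0, mul0r).
have [-> | x3_0] := eqVneq x3 0; first by rewrite !(mulr0, mul0r).
have [-> | x4_0] := eqVneq x4 0; first by rewrite !(mulr0, mul0r).
by rewrite -(hg x1_0 x2_0 x3_0 x4_0); ring.
Qed.

Lemma comp2_chain_scale (A B D E A' B' D' E' : endo2 C N) (g : C) i j m n :
  (forall a b c d e f : 'I_N,
     E i j a b * (D a b c d * (B c d e f * A e f m n)) =
     g * (E' i j a b * (D' a b c d * (B' c d e f * A' e f m n)))) ->
  comp2 (comp2 (comp2 A B) D) E i j m n = g * comp2 (comp2 (comp2 A' B') D') E' i j m n.
Proof.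
move=> eterm; rewrite /comp2 mulr_sumr; apply: eq_bigr => a _.
rewrite mulr_sumr; apply: eq_bigr => b _.
rewrite !mulr_sumr; apply: eq_bigr => c _; rewrite !mulr_sumr; apply: eq_bigr => d _.
rewrite !mulr_sumr; apply: eq_bigr => e _; rewrite !mulr_sumr; apply: eq_bigr => f _.
exact: eterm.
Qed.

Lemma reflection_lhs_twist (p s q r z w z1 z2 : C) i j m n : p != 0 -> s != 0 ->
  comp2 (comp2 (comp2 (Rtr z1 q p) (K1 (Ktr z r s))) (op21 (Rtr z2 q p))) (K2 (Ktr w r s)) i j m n
  = p ^ ((i%:Z - m%:Z) * 2) * s ^ (i%:Z + j%:Z - m%:Z - n%:Z) *
    comp2 (comp2 (comp2 (Rtr z1 q 1) (K1 (Ktr z r 1))) (op21 (Rtr z2 q 1)))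
      (K2 (Ktr w r 1)) i j m n.
Proof.
move=> p0 s0; apply: comp2_chain_scale => a b c d e f.
rewrite (K2_twist w r s) !op21E (Rtr_twist z1 q p) (Rtr_twist z2 q p) (K1_twist z r s).
apply: mul4_twist.
move=> /K2_support eai /Rtr1_weight wbadc /K1_support efd /Rtr1_weight wefmn.
subst a f.
have ep : (i%:Z - d%:Z) * 2 + (d%:Z - m%:Z) * 2 = (i%:Z - m%:Z) * 2 by lia.
have es : (j%:Z - b%:Z) + (c%:Z - e%:Z) = i%:Z + j%:Z - m%:Z - n%:Z by lia.
by rewrite -ep -es !expfzDr //; ring.
Qed.

Lemma reflection_rhs_twist (p s q r z w z1 z2 : C) i j m n : p != 0 -> s != 0 ->
  comp2 (comp2 (comp2 (K2 (Ktr w r s)) (Rtr z2 q p)) (K1 (Ktr z r s))) (op21 (Rtr z1 q p)) i j m n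
  = p ^ ((i%:Z - m%:Z) * 2) * s ^ (i%:Z + j%:Z - m%:Z - n%:Z) *
    comp2 (comp2 (comp2 (K2 (Ktr w r 1)) (Rtr z2 q 1)) (K1 (Ktr z r 1)))
      (op21 (Rtr z1 q 1)) i j m n.
Proof.
move=> p0 s0; apply: comp2_chain_scale => a b c d e f.
rewrite !op21E (Rtr_twist z1 q p) (Rtr_twist z2 q p) (K1_twist z r s) (K2_twist w r s).
apply: mul4_twist.
move=> /Rtr1_weight wjiba /K1_support edb /Rtr1_weight wcdef /K2_support eme.
subst d e.
have ep : (i%:Z - b%:Z) * 2 + (b%:Z - m%:Z) * 2 = (i%:Z - m%:Z) * 2 by lia.
have es : (a%:Z - c%:Z) + (f%:Z - n%:Z) = i%:Z + j%:Z - m%:Z - n%:Z by lia.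
by rewrite -ep -es !expfzDr //; ring.
Qed.

End Twist.

Unset Implicit Arguments.

Theorem mainTheorem5 (C : numClosedFieldType) (N : nat) (q p r s z w : C) :
  (1 <= N)%N ->
  q != 0 -> p != 0 -> r != 0 -> s != 0 ->
  q ^+ 2 != 1 -> r ^+ 2 != 1 ->
  z != 0 -> w != 0 ->
  (z / w) ^+ 2 != 1 -> (z * w) ^+ 2 != 1 -> z ^+ 4 != 1 -> w ^+ 4 != 1 ->
  let R := @Rtr C N in
  let K := @Ktr C N in
  forall i j k l : 'I_N,
    comp2 (comp2 (comp2 (R (z / w) q p) (K1 (K z r s)))
                 (op21 (R (z * w) q p))) (K2 (K w r s)) i j k l
    = comp2 (comp2 (comp2 (K2 (K w r s)) (R (z * w) q p))
                   (K1 (K z r s))) (op21 (R (z / w) q p)) i j k l.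
Proof.
move=> _ q0 p0 r0 s0 q2 r2 z0 w0 zdivw2 zmulw2 z4 w4 R K i j k l.
rewrite /R /K reflection_lhs_twist // reflection_rhs_twist //.
by rewrite (reflection_equation_untwisted q0 r0 q2 r2 z0 w0 zdivw2 zmulw2 z4 w4).
Qed.
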